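(* Let $R$ be an integral domain, $J$ an ideal of $R$ and $f(X)\in R[X]$ a monic polynomial of degree at least $1$. Then the ideal $I = J R[X] + f(X)R[X]$ of $R[X]$ is power stable; moreover $I^t\cap R = J^t$ for all $t\geq 1$.
   Context: An ideal $I$ of the polynomial ring $R[X]$ over an integral domain $R$ is called power stable if $I^t\cap R = (I\cap R)^t$ for all integers $t\geq 1$. *)

From HB Require Import structures.
From mathcomp Require Import all_boot all_order all_algebra.
Set Implicit Arguments. Unset Strict Implicit. Unset Printing Implicit Defensive.
Import GRing.Theory.
Local Open Scope ring_scope.

Definition is_ideal (A : comRingType) (I : A -> Prop) : Prop :=
  [/\ I 0, (forall x y, I x -> I y -> I (x + y)) &
      (forall r x, I x -> I (r * x))].

Definition ideal_gen (A : comRingType) (S : A -> Prop) : A -> Prop :=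
  fun x => exists (n : nat) (r s : 'I_n -> A),
    (forall i, S (s i)) /\ x = \sum_(i < n) r i * s i.

Definition ideal_mul (A : comRingType) (I J : A -> Prop) : A -> Prop :=
  fun x => exists (n : nat) (a b : 'I_n -> A),
    (forall i, I (a i) /\ J (b i)) /\ x = \sum_(i < n) a i * b i.

Fixpoint ideal_pow (A : comRingType) (I : A -> Prop) (t : nat) : A -> Prop :=
  match t with
  | 0%N => fun _ => True
  | t'.+1 => ideal_mul (ideal_pow I t') I
  end.

Definition contraction (R : comRingType) (I : {poly R} -> Prop) : R -> Prop :=
  fun c => I c%:P.

Definition set_eq (T : Type) (A B : T -> Prop) : Prop := forall x, A x <-> B x.

Definition power_stable (R : idomainType) (I : {poly R} -> Prop) : Prop :=
  forall t : nat, (1 <= t)%N ->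
    set_eq (contraction (ideal_pow I t)) (ideal_pow (contraction I) t).

Definition ext_plus_principal (R : comRingType) (J : R -> Prop) (f : {poly R})
  : {poly R} -> Prop :=
  ideal_gen (fun p => (exists c, J c /\ p = c%:P) \/ p = f).

From HB Require Import structures.
From mathcomp Require Import all_boot all_order all_algebra.
Set Implicit Arguments. Unset Strict Implicit. Unset Printing Implicit Defensive.
Import GRing.Theory.
Local Open Scope ring_scope.

(* Every element of I^t has the
   shape g + f h where all coefficients of g lie in J^t: this shape is
   stable under sums and, multiplicatively, coefficients in A times
   coefficients in B land in A B.  The key point is that a constant c of the
   form g + f h, with f monic of degree >= 1, already lies in the coefficient
   ideal: if h <> 0, the top coefficient of f h is lead_coef h and sits in a
   degree >= 1, so lead_coef h = - (coefficient of g) is in the ideal, and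
   moving the top monomial of h into g lowers the size of h.  Hence
   I^t ∩ R ⊆ J^t; the converse inclusion is clear since J ⊆ I.  The case t = 1
   gives I ∩ R = J, and power stability follows by rewriting (I ∩ R)^t. *)

Section Ideals.
Variable R : comNzRingType.

Lemma ideal_sum (A : R -> Prop) n (F : 'I_n -> R) :
  is_ideal A -> (forall i, A (F i)) -> A (\sum_(i < n) F i).
Proof.
case=> A0 AD _ AF; elim: n F AF => [|n IH] F AF; first by rewrite big_ord0.
by rewrite big_ord_recr /=; apply: AD; [apply: IH | apply: AF].
Qed.

Lemma ideal_opp (A : R -> Prop) x : is_ideal A -> A x -> A (- x).
Proof. by case=> _ _ AM Ax; rewrite -mulN1r; apply: AM. Qed.

Lemma ideal_mul_prod (A B : R -> Prop) a b : A a -> B b -> ideal_mul A B (a * b).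
Proof. by move=> Aa Bb; exists 1%N, (fun _ => a), (fun _ => b); rewrite big_ord1. Qed.

Lemma ideal_mul_ideal (A B : R -> Prop) : is_ideal B -> is_ideal (ideal_mul A B).
Proof.
case=> B0 BD BM; split.
- by exists 0%N, (fun _ => 0), (fun _ => 0); split; [case | rewrite big_ord0].
- move=> _ _ [n [a [b [Hab ->]]]] [m [a' [b' [Hab' ->]]]].
  pose glue (u : 'I_n -> R) (v : 'I_m -> R) (i : 'I_(n + m)) :=
    match split i with inl j => u j | inr k => v k end.
  exists (n + m)%N, (glue a a'), (glue b b'); split.
    by move=> i; rewrite /glue; case: (split i).
  rewrite big_split_ord /=; congr (_ + _); apply: eq_bigr => i _.
    by rewrite /glue (unsplitK (inl _ i)).
  by rewrite /glue (unsplitK (inr _ i)).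
- move=> r _ [n [a [b [Hab ->]]]]; exists n, a, (fun i => r * b i); split.
    by move=> i; case: (Hab i) => Aa Bb; split => //; apply: BM.
  by rewrite mulr_sumr; apply: eq_bigr => i _; rewrite mulrCA.
Qed.

Lemma ideal_pow_ideal (A : R -> Prop) t : is_ideal A -> is_ideal (ideal_pow A t).
Proof. by case: t => [|t] HA; [split | apply: ideal_mul_ideal]. Qed.

Lemma ideal_pow_ext (A B : R -> Prop) t :
  set_eq A B -> set_eq (ideal_pow A t) (ideal_pow B t).
Proof.
move=> AB; elim: t => [|t IH] x //=.
by split=> -[n [a [b [Hab ->]]]]; exists n, a, b; split=> // i;
  case: (Hab i) => Ha Hb; split; apply/IH || apply/AB.
Qed.

End Ideals.

Section CoefficientIdeal.
Variables (R : comNzRingType) (f : {poly R}).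

(* All coefficients of g lie in A, i.e. g is in A R[X]. *)
Definition coef_in (A : R -> Prop) (g : {poly R}) : Prop := forall i, A g`_i.

Definition mod_in (A : R -> Prop) (p : {poly R}) : Prop :=
  exists g h : {poly R}, coef_in A g /\ p = g + f * h.

Lemma coef_inMl (A : R -> Prop) (q g : {poly R}) :
  is_ideal A -> coef_in A g -> coef_in A (q * g).
Proof.
move=> HA Ag i; rewrite coefM; apply: ideal_sum => // j.
by case: HA => _ _ AM; apply: AM.
Qed.

Lemma coef_inC (A : R -> Prop) c : is_ideal A -> A c -> coef_in A c%:P.
Proof. by case=> A0 _ _ Ac i; rewrite coefC; case: eqP. Qed.

Lemma mod_in_multiple (A : R -> Prop) h : is_ideal A -> mod_in A (f * h).
Proof. by move=> HA; exists 0, h; split; [apply: (coef_inC HA); case: HA | rewrite add0r]. Qed.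

Lemma mod_in_coef (A : R -> Prop) g : coef_in A g -> mod_in A g.
Proof. by move=> Ag; exists g, 0; rewrite mulr0 addr0. Qed.

Lemma mod_inD (A : R -> Prop) p q :
  is_ideal A -> mod_in A p -> mod_in A q -> mod_in A (p + q).
Proof.
case=> _ AD _ [g [h [Ag ->]]] [g' [h' [Ag' ->]]].
exists (g + g'), (h + h'); split; first by move=> i; rewrite coefD; apply: AD.
by rewrite mulrDr addrACA.
Qed.

Lemma mod_in_scale (A : R -> Prop) q p : is_ideal A -> mod_in A p -> mod_in A (q * p).
Proof.
move=> HA [g [h [Ag ->]]]; exists (q * g), (q * h); split; first exact: coef_inMl.
by rewrite mulrDr mulrCA.
Qed.

Lemma mod_in_sum (A : R -> Prop) n (F : 'I_n -> {poly R}) :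
  is_ideal A -> (forall i, mod_in A (F i)) -> mod_in A (\sum_(i < n) F i).
Proof.
move=> HA AF; elim: n F AF => [|n IH] F AF.
  by rewrite big_ord0 -(mulr0 f); apply: mod_in_multiple.
by rewrite big_ord_recr /=; apply: mod_inD => //; apply: IH.
Qed.

Lemma mod_inM (A B : R -> Prop) p q :
  is_ideal B -> mod_in A p -> mod_in B q -> mod_in (ideal_mul A B) (p * q).
Proof.
move=> HB [g [h [Ag ->]]] [g' [h' [Bg' ->]]].
exists (g * g'), (h * g' + g * h' + f * h * h'); split.
  move=> i; rewrite coefM; apply: ideal_sum; first exact: ideal_mul_ideal.
  by move=> j; apply: ideal_mul_prod.
rewrite !mulrDr !mulrDl !addrA; congr (_ + _ + _ + _).
- by rewrite mulrA.
- by rewrite mulrCA.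
- by rewrite mulrCA.
Qed.

Hypotheses (f_monic : f \is monic) (f_nonconst : (2 <= size f)%N).

(* If c = g + f h with g in A R[X] and h <> 0, then lead_coef h is in A: it is
   the top coefficient of f h, which sits in degree >= 1 where c vanishes. *)
Lemma lead_coef_in (A : R -> Prop) c g h :
  is_ideal A -> coef_in A g -> h != 0 -> c%:P = g + f * h -> A (lead_coef h).
Proof.
move=> HA Ag hn0 Ec; set k := (size (f * h)).-1.
have k_neq0 : k != 0%N.
  rewrite /k size_monicM // -lt0n.
  case: (size f) f_nonconst => [|[|n]] // _.
  by rewrite !addSn /= addn_gt0 size_poly_gt0 hn0 orbT.
have top : g`_k + lead_coef h = 0.
  rewrite -(lead_coef_monicM h f_monic) lead_coefE -/k -coefD -Ec coefC.
  exact: ifN.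
have -> : lead_coef h = - g`_k by apply/eqP; rewrite -addr_eq0 addrC top.
exact: ideal_opp.
Qed.

(* Moving the top monomial of h into g: the representation c = g + f h can be
   replaced by one in which h has smaller size. *)
Lemma mod_in_const_step (A : R -> Prop) c g h :
  is_ideal A -> coef_in A g -> h != 0 -> c%:P = g + f * h ->
  exists g' h', [/\ coef_in A g', c%:P = g' + f * h' & (size h' < size h)%N].
Proof.
move=> HA Ag hn0 Ec; set m := (size h).-1.
have size_h : size h = m.+1 by rewrite prednK // size_poly_gt0.
have top_in : coef_in A (drop_poly m h).
  move=> i; rewrite coef_drop_poly.
  case: i => [|i]; first by rewrite add0n; exact: lead_coef_in Ec.
  by rewrite nth_default ?size_h ?addSn ?ltnS ?leq_addl //; case: HA.
exists (g + f * (drop_poly m h * 'X^m)), (take_poly m h); split.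
- move=> i; rewrite coefD; case: (HA) => _ AD _; apply: AD; first exact: Ag.
  by rewrite [_ * 'X^m]mulrC mulrA; apply: coef_inMl.
- by rewrite -addrA -mulrDr [_ + take_poly _ _]addrC poly_take_drop.
- by rewrite size_h ltnS size_take_poly.
Qed.

Lemma mod_in_const (A : R -> Prop) c : is_ideal A -> mod_in A c%:P -> A c.
Proof.
move=> HA [g [h [Ag Ec]]]; have [n lt_h] := ubnP (size h).
elim: n g h Ag Ec lt_h => // n IH g h Ag Ec lt_h.
have [h0|hn0] := eqVneq h 0.
  move: (Ag 0%N); have -> : g = c%:P by rewrite Ec h0 mulr0 addr0.
  by rewrite coefC.
have [g' [h' [Ag' Ec' lt_h']]] := mod_in_const_step HA Ag hn0 Ec.
by apply: (IH g' h') => //; apply: leq_trans lt_h' _; rewrite -ltnS.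
Qed.

End CoefficientIdeal.
Section Main.
Variables (R : comNzRingType) (J : R -> Prop) (f : {poly R}).
Hypotheses (HJ : is_ideal J) (f_monic : f \is monic) (f_nonconst : (2 <= size f)%N).

Local Notation I := (ext_plus_principal J f).

Lemma ext_plus_principal_const c : J c -> I c%:P.
Proof.
move=> Jc; exists 1%N, (fun _ => 1), (fun _ => c%:P).
by split; [left; exists c | rewrite big_ord1 mul1r].
Qed.

Lemma ext_plus_principal_mod_in p : I p -> mod_in f J p.
Proof.
move=> [n [r [s [Hs ->]]]]; apply: mod_in_sum => // i.
apply: mod_in_scale => //; case: (Hs i) => [[c [Jc ->]] | ->].
  by apply: mod_in_coef; apply: coef_inC.
by rewrite -[X in mod_in _ _ X]mulr1; apply: mod_in_multiple.
Qed.

Lemma ideal_pow_mod_in t p : ideal_pow I t p -> mod_in f (ideal_pow J t) p.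
Proof.
elim: t p => [|t IH] p /=; first by move=> _; apply: mod_in_coef.
move=> [n [a [b [Hab ->]]]]; apply: mod_in_sum; first exact: ideal_mul_ideal.
move=> i; case: (Hab i) => Ia Ib.
by apply: mod_inM => //; [apply: IH | apply: ext_plus_principal_mod_in].
Qed.

Lemma ideal_pow_const t c : ideal_pow J t c -> ideal_pow I t c%:P.
Proof.
elim: t c => [|t IH] c //= [n [a [b [Hab ->]]]].
exists n, (fun i => (a i)%:P), (fun i => (b i)%:P); split.
  by move=> i; case: (Hab i) => Ja Jb; split; [apply: IH | apply: ext_plus_principal_const].
by rewrite rmorph_sum; apply: eq_bigr => i _; rewrite -polyCM.
Qed.

Lemma contraction_ideal_pow t : set_eq (contraction (ideal_pow I t)) (ideal_pow J t).
Proof.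
move=> c; split; last exact: ideal_pow_const.
move/ideal_pow_mod_in; apply: mod_in_const => //; exact: ideal_pow_ideal.
Qed.

Lemma contraction_ext_plus_principal : set_eq (contraction I) J.
Proof.
move=> c; split; last exact: ext_plus_principal_const.
by move/ext_plus_principal_mod_in; apply: mod_in_const.
Qed.

End Main.

Theorem theorem3p5 (R : idomainType) (J : R -> Prop) (f : {poly R}) :
  is_ideal J -> f \is monic -> (2 <= size f)%N ->
  power_stable (ext_plus_principal J f) /\
  (forall t : nat, (1 <= t)%N ->
     set_eq (contraction (ideal_pow (ext_plus_principal J f) t)) (ideal_pow J t)).
Proof.
move=> HJ f_monic f_nonconst.
have contr_pow := contraction_ideal_pow HJ f_monic f_nonconst.
split=> [t _ c | t _]; last exact: contr_pow.
have := ideal_pow_ext t (contraction_ext_plus_principal HJ f_monic f_nonconst) c.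
by have := contr_pow t c; tauto.
Qed.
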